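(* Let $R$ be a commutative Bezout domain and let $\Phi=\mathrm{diag}(\varphi_1,\dots,\varphi_t,0,\dots,0)$ be an $n\times n$ $d$-matrix with $\varphi_t\neq0$. Then $\mathbf G_\Phi$ consists exactly of the invertible $n\times n$ matrices $H=(h_{ij})$ such that $h_{ij}=0$ for all $i>t$, $j\le t$, and $\frac{\varphi_i}{\varphi_j}\mid h_{ij}$ for all $1\le j<i\le t$; i.e. $H=\begin{pmatrix}H_1&*\\0&H_2\end{pmatrix}$ with $H_2\in GL_{n-t}(R)$ and $H_1$ a $t\times t$ matrix whose entry in position $(i,j)$, $i>j$, has the form $\frac{\varphi_i}{\varphi_j}h'_{ij}$.
   Context: A commutative Bezout domain is a commutative integral domain with $1\ne0$ in which every finitely generated ideal is principal. A $d$-matrix is a diagonal matrix $\mathrm{diag}(\varphi_1,\dots)$ with $\varphi_i\mid\varphi_{i+1}$. For an $n\times n$ $d$-matrix $\Phi$, the Zelisko group is $\mathbf G_\Phi=\{H\in GL_n(R):\ \exists K\in GL_n(R),\ H\Phi=\Phi K\}$. *)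

From HB Require Import structures.
From mathcomp Require Import all_boot all_order all_algebra.
Set Implicit Arguments. Unset Strict Implicit. Unset Printing Implicit Defensive.
Import GRing.Theory.
Local Open Scope ring_scope.

Definition dvdR (R : comRingType) (a b : R) : Prop := exists c : R, b = c * a.

Definition in_fg_ideal (R : comRingType) (s : seq R) (x : R) : Prop :=
  exists c : 'I_(size s) -> R, x = \sum_(i < size s) c i * s`_i.

Definition bezout_domain (R : idomainType) : Prop :=
  forall s : seq R, exists d : R,
    forall x : R, in_fg_ideal s x <-> exists r : R, x = r * d.

(* d-matrix diag(phi_0,...,phi_{t-1},0,...,0) of size n (0-based indices) *)
Definition dmx (R : idomainType) (n t : nat) (phi : nat -> R) : 'M[R]_n :=
  diag_mx (\row_(i < n) (if (i < t)%N then phi i else 0)).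

Definition zelisko (R : idomainType) (n : nat) (Phi : 'M[R]_n) (H : 'M[R]_n) : Prop :=
  H \in unitmx /\ exists K : 'M[R]_n, K \in unitmx /\ H *m Phi = Phi *m K.

From mathcomp Require Import all_boot all_order all_algebra.
Import GRing.Theory.
Local Open Scope ring_scope.

(* Writing [d_i] for the diagonal of [Phi], [H Phi = Phi K] reads
   [h_ij d_j = d_i k_ij] entrywise.  Rows [i >= t] force [h_ij = 0] for [j < t],
   and for [j < i < t] cancelling [phi_j] gives [h_ij = (phi_i / phi_j) k_ij].
   Conversely these conditions let one solve for [K] entrywise, with [K] block
   lower triangular and sharing the lower-right block of [H]; since
   [H_1 Phi_1 = Phi_1 K_1] and [det Phi_1 <> 0], [det K = det H]. *)

Section IdomainFacts.

Variable R : idomainType.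

Lemma dvdRR (a : R) : dvdR a a.
Proof. by exists 1; rewrite mul1r. Qed.

Lemma dvdR_trans {a b c : R} : dvdR a b -> dvdR b c -> dvdR a c.
Proof. by move=> [x ->] [y ->]; exists (y * x); rewrite mulrA. Qed.

Lemma dvdR_neq0 {a b : R} : dvdR a b -> b != 0 -> a != 0.
Proof. by move=> [c ->]; apply: contraNneq => ->; rewrite mulr0. Qed.

Lemma det_diag_conj m (A B : 'M[R]_m) (d : 'rV[R]_m) :
  (forall i, d 0 i != 0) -> A *m diag_mx d = diag_mx d *m B -> \det A = \det B.
Proof.
move=> d_neq0 /(congr1 determinant); rewrite !det_mulmx mulrC; apply: mulfI.
by rewrite det_diag; apply/prodf_neq0 => i _.
Qed.

End IdomainFacts.

Section DMatrix.

Variables (R : idomainType) (t : nat) (phi : nat -> R).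

Definition dmx_coef (i : nat) : R := if (i < t)%N then phi i else 0.

Lemma mul_mx_dmxE n (A : 'M[R]_n) i j :
  (A *m dmx n t phi) i j = A i j * dmx_coef j.
Proof. by rewrite mul_mx_diag !mxE. Qed.

Lemma mul_dmx_mxE n (A : 'M[R]_n) i j :
  (dmx n t phi *m A) i j = dmx_coef i * A i j.
Proof. by rewrite mul_diag_mx !mxE. Qed.

Lemma dmx_commute_entry {n} {H K : 'M[R]_n} i j :
  H *m dmx n t phi = dmx n t phi *m K -> H i j * dmx_coef j = dmx_coef i * K i j.
Proof. by move/(congr1 (fun M : 'M_n => M i j)); rewrite mul_mx_dmxE mul_dmx_mxE. Qed.

Hypothesis phi_div : forall i : nat, (i.+1 < t)%N -> dvdR (phi i) (phi i.+1).
Hypothesis phi_t : phi t.-1 != 0.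

Lemma dvdR_chain {i j} : (j <= i)%N -> (i < t)%N -> dvdR (phi j) (phi i).
Proof.
elim: i => [|i IH]; first by rewrite leqn0 => /eqP-> _; apply: dvdRR.
rewrite leq_eqVlt ltnS => /predU1P[-> _|ji it]; first exact: dvdRR.
exact: dvdR_trans (IH ji (ltnW it)) (phi_div _ it).
Qed.

Lemma phi_neq0 {j} : (j < t)%N -> phi j != 0.
Proof.
move=> jt; have t_gt0 : (0 < t)%N by apply: leq_ltn_trans jt.
apply: dvdR_neq0 phi_t; apply: dvdR_chain; last by rewrite prednK.
by rewrite -ltnS prednK.
Qed.

Lemma dmx_commute_lower0 n (H K : 'M[R]_n) (i j : 'I_n) :
  H *m dmx n t phi = dmx n t phi *m K -> (t <= i)%N -> (j < t)%N -> H i j = 0.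
Proof.
move=> /(dmx_commute_entry i j) + ti jt; rewrite /dmx_coef jt ltnNge ti mul0r.
by move/eqP; rewrite mulf_eq0 (negbTE (phi_neq0 jt)) orbF => /eqP.
Qed.

Lemma dmx_commute_dvd n (H K : 'M[R]_n) (i j : 'I_n) :
  H *m dmx n t phi = dmx n t phi *m K -> (j < i)%N -> (i < t)%N ->
  exists q h' : R, phi i = q * phi j /\ H i j = q * h'.
Proof.
move=> /(dmx_commute_entry i j) HK ji it; have jt := ltn_trans ji it.
have [q Hq] := dvdR_chain (ltnW ji) it.
exists q, (K i j); split=> //; apply: (mulIf (phi_neq0 jt)).
by move: HK; rewrite /dmx_coef it jt Hq mulrAC.
Qed.

Section Solution.

Variables (m : nat) (H : 'M[R]_(t + m)).
Hypothesis H_lower0 : forall i j : 'I_(t + m), (t <= i)%N -> (j < t)%N -> H i j = 0.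
Hypothesis H_dvd : forall i j : 'I_(t + m), (j < i)%N -> (i < t)%N ->
  exists q h' : R, phi i = q * phi j /\ H i j = q * h'.

Lemma dmx_commute_solve_entry (i j : 'I_(t + m)) : exists k : R,
  [/\ H i j * dmx_coef j = dmx_coef i * k,
      (t <= i)%N -> k = H i j & (i < t)%N -> (t <= j)%N -> k = 0].
Proof.
rewrite /dmx_coef; case: (ltnP i t) => it; last first.
  exists (H i j); split=> //.
  by case: ltnP => jt; rewrite mul0r ?mulr0 // H_lower0 // mul0r.
case: (ltnP j t) => jt; last by exists 0; rewrite !mulr0.
case: (ltnP j i) => [ji|ij].
  have [q [h' [-> ->]]] := H_dvd _ _ ji it.
  by exists h'; split=> //; rewrite mulrAC.
have [r ->] := dvdR_chain ij jt.
by exists (H i j * r); split=> //; rewrite [r * _]mulrC [LHS]mulrCA.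
Qed.

Lemma dmx_commute_solve :
  exists K : 'M[R]_(t + m), [/\ H *m dmx _ t phi = dmx _ t phi *m K,
    ulsubmx H *m diag_mx (\row_i phi i) = diag_mx (\row_i phi i) *m ulsubmx K,
    ursubmx K = 0 & drsubmx K = drsubmx H].
Proof.
have [f Hf] := fin_all_exists (fun p => dmx_commute_solve_entry p.1 p.2).
exists (\matrix_(i, j) f (i, j)); split.
- by apply/matrixP => i j; rewrite mul_mx_dmxE mul_dmx_mxE mxE; case: (Hf (i, j)).
- apply/matrixP => i j; rewrite mul_mx_diag mul_diag_mx !mxE.
  by case: (Hf (lshift m i, lshift m j)); rewrite /dmx_coef /= !ltn_ord.
- by apply/matrixP => i j; rewrite !mxE; case: (Hf (lshift m i, rshift t j)) => _ _ ->;
    rewrite /= ?ltn_ord ?leq_addr.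
- by apply/matrixP => i j; rewrite !mxE; case: (Hf (rshift t i, rshift t j)) => _ -> //=;
    rewrite leq_addr.
Qed.

Lemma dmx_commute_unitmx (H_unit : H \in unitmx) :
  exists K : 'M[R]_(t + m), K \in unitmx /\ H *m dmx _ t phi = dmx _ t phi *m K.
Proof.
have [K [HK H1K1 K_ur K_dr]] := dmx_commute_solve; exists K; split=> //.
have H_dl : dlsubmx H = 0.
  by apply/matrixP => i j; rewrite !mxE H_lower0 //= ?ltn_ord ?leq_addr.
have det_H1 : \det (ulsubmx H) = \det (ulsubmx K).
  by apply: det_diag_conj H1K1 => i; rewrite mxE; apply: phi_neq0.
move: H_unit; rewrite !unitmxE -(submxK H) -(submxK K) H_dl K_ur K_dr.
by rewrite det_ublock det_lblock det_H1.
Qed.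

End Solution.

Lemma zelisko_of_shape n : (t <= n)%N -> forall H : 'M[R]_n, H \in unitmx ->
  (forall i j : 'I_n, (t <= i)%N -> (j < t)%N -> H i j = 0) ->
  (forall i j : 'I_n, (j < i)%N -> (i < t)%N ->
     exists q h' : R, phi i = q * phi j /\ H i j = q * h') ->
  zelisko (dmx n t phi) H.
Proof.
move=> /subnKC <-; move: (n - t)%N => m H H_unit H_lower0 H_dvd.
by split=> //; apply: dmx_commute_unitmx.
Qed.

End DMatrix.

Theorem theorem2p7 (R : idomainType) (HB : bezout_domain R) (n t : nat)
  (phi : nat -> R) (t_pos : (0 < t)%N) (t_le : (t <= n)%N)
  (phi_div : forall i : nat, (i.+1 < t)%N -> dvdR (phi i) (phi i.+1))
  (phi_t : phi t.-1 != 0) (H : 'M[R]_n) :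
  zelisko (dmx n t phi) H <->
  [/\ H \in unitmx,
      (forall i j : 'I_n, (t <= i)%N -> (j < t)%N -> H i j = 0) &
      (forall i j : 'I_n, (j < i)%N -> (i < t)%N ->
         exists q h' : R, phi i = q * phi j /\ H i j = q * h')].
Proof.
split=> [[H_unit [K [_ HK]]]|[H_unit H_lower0 H_dvd]].
  split=> // i j; first exact: dmx_commute_lower0 HK.
  exact: dmx_commute_dvd HK.
exact: zelisko_of_shape.
Qed.
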